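(* For all $A,r\in\mathbb{N}$ and $\varepsilon>0$ there exists $N\in\mathbb{N}$ such that the following holds. Let $n_1,\ldots,n_r$ be positive integers with $n_i\leq An_j$ for all $i,j$ and $n=n_1+\cdots+n_r\geq N$; let $\Lambda=(\lambda_{i,j})$ be a symmetric non-negative $r\times r$ matrix that is $\varepsilon$-separated; let $p_{i,j}=\lambda_{i,j}/\sqrt{n_in_j}$, $M_{i,j}=p_{i,j}n_j$, and suppose $\rho(M)\geq 1+\varepsilon$. Let $Q=((n_j-n^{0.999})p_{i,j})_{i,j\in[r]}$. Then $\rho(Q)\geq 1+\varepsilon/2$; in particular, for every non-zero initial configuration $x$, the Galton–Watson process $\mathrm{GW}(\vec n-n^{0.999}\vec 1,P,x)$ is super-critical.
   Context: $\rho(\cdot)$ denotes the largest eigenvalue. $\Lambda$ is $\varepsilon$-separated if for all $i,j$ either $\lambda_{i,j}=0$ or $\varepsilon\leq\lambda_{i,j}\leq 1/\varepsilon$. $\mathrm{GW}(\vec m,P,x)$ is the multi-type Galton–Watson process in which each individual of type $i$ has, independently for each $j$, a $\mathrm{Binomial}(m_j,p_{i,j})$ number of children of type $j$; its mean offspring matrix is $(m_jp_{i,j})_{i,j}$, and it is called super-critical when the largest eigenvalue of this matrix exceeds $1$. *)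

From HB Require Import structures.
From mathcomp Require Import all_boot all_order all_algebra.
From mathcomp Require Import classical_sets reals exp.
Set Implicit Arguments. Unset Strict Implicit. Unset Printing Implicit Defensive.
Import Order.TTheory GRing.Theory Num.Theory.
Local Open Scope ring_scope.
Local Open Scope classical_set_scope.

Definition rho (R : realType) (k : nat) (B : 'M[R]_k) : R :=
  sup [set a : R | eigenvalue B a].

Definition eps_separated (R : realType) (k : nat) (eps : R) (L : 'M[R]_k) : Prop :=
  forall i j, L i j = 0 \/ (eps <= L i j /\ L i j <= eps^-1).

Definition pmat (R : realType) (k : nat) (nn : 'I_k -> nat) (L : 'M[R]_k) : 'M[R]_k :=
  \matrix_(i, j) (L i j / Num.sqrt ((nn i)%:R * (nn j)%:R)).

(* mean offspring matrix (m_j p_{i,j})_{i,j} of GW(m, P, x) *)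
Definition GW_mean (R : realType) (k : nat) (m : 'I_k -> R) (P : 'M[R]_k) : 'M[R]_k :=
  \matrix_(i, j) (m j * P i j).

(* GW(m, P, x) is super-critical (independent of the nonzero initial config x) *)
Definition GW_supercritical (R : realType) (k : nat) (m : 'I_k -> R) (P : 'M[R]_k) : Prop :=
  1 < rho (GW_mean m P).

(* Write D_x for the diagonal matrix of a positive vector x and let P be
   symmetric.  A left eigenvector v of P D_x for an eigenvalue mu >= 0 satisfies
   v P v^T = mu * v D_x^-1 v^T.  Conversely, let lambda be the maximum of the
   generalised Rayleigh quotient v P v^T / v D_y^-1 v^T, attained at some c on
   the compact ellipsoid v D_y^-1 v^T = 1: then lambda D_y^-1 - P is positive
   semidefinite and c is isotropic for it, so c P = lambda c D_y^-1 and lambda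
   is an eigenvalue of P D_y.  Comparing the two quotients shows that
   t x <= y entrywise forces rho(P D_y) >= t rho(P D_x).
   In the theorem n <= r A n_j, so n^0.999 <= delta n_j once n is large, i.e.
   n_j - n^0.999 >= (1 - delta) n_j; the choice delta = eps / (2 (1 + eps))
   turns 1 + eps into 1 + eps / 2. *)

From HB Require Import structures.
From mathcomp Require Import all_boot all_order all_algebra.
From mathcomp Require Import classical_sets boolp reals exp.
From mathcomp Require Import topology normedtype derive.
From mathcomp Require Import ring lra.
Set Implicit Arguments. Unset Strict Implicit. Unset Printing Implicit Defensive.
Import Order.TTheory GRing.Theory Num.Theory.
Import numFieldTopology.Exports numFieldNormedType.Exports.
Local Open Scope ring_scope.
Local Open Scope classical_set_scope.

Section QuadraticForm.
Variable R : comPzRingType.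

Definition quad_form k (B : 'M[R]_k) (v : 'rV[R]_k) : R := (v *m B *m v^T) 0 0.

Definition diagf k (d : 'I_k -> R) : 'M[R]_k := diag_mx (\row_j d j).

Lemma quad_formE k (B : 'M[R]_k) v :
  quad_form B v = \sum_i \sum_j v 0 i * B i j * v 0 j.
Proof.
rewrite /quad_form mxE; under eq_bigr => j _ do rewrite !mxE big_distrl /=.
by rewrite exchange_big.
Qed.

Lemma quad_form0 k (B : 'M[R]_k) : quad_form B 0 = 0.
Proof. by rewrite /quad_form !mul0mx mxE. Qed.

Lemma quad_formZ k (B : 'M[R]_k) a v :
  quad_form B (a *: v) = a ^+ 2 * quad_form B v.
Proof. by rewrite /quad_form linearZ /= -!scalemxAl -scalemxAr !mxE mulrA. Qed.

Lemma quad_formB k (B C : 'M[R]_k) v :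
  quad_form (B - C) v = quad_form B v - quad_form C v.
Proof. by rewrite /quad_form mulmxBr mulmxBl !mxE. Qed.

Lemma quad_form_scale k a (B : 'M[R]_k) v :
  quad_form (a *: B) v = a * quad_form B v.
Proof. by rewrite /quad_form -scalemxAr -scalemxAl mxE. Qed.

Lemma quad_formD_sym k (B : 'M[R]_k) x y : B^T = B ->
  quad_form B (x + y) = quad_form B x + 2 * (x *m B *m y^T) 0 0 + quad_form B y.
Proof.
move=> sB; have yBx : (y *m B *m x^T) 0 0 = (x *m B *m y^T) 0 0.
  transitivity ((y *m B *m x^T)^T 0 0); first by rewrite [RHS]mxE.
  by rewrite !trmx_mul trmxK sB mulmxA.
have addE (M N : 'M[R]_1) : (M + N) 0 0 = M 0 0 + N 0 0 by rewrite mxE.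
rewrite /quad_form linearD /= !(mulmxDl, mulmxDr) !addE yBx; ring.
Qed.

Lemma quad_form_diag k (d : 'I_k -> R) v :
  quad_form (diagf d) v = \sum_j d j * v 0 j ^+ 2.
Proof.
rewrite /quad_form mul_mx_diag mxE; apply: eq_bigr => j _; rewrite !mxE.
by rewrite expr2 mulrA [v 0 j * d j]mulrC.
Qed.

Lemma mulmx_diagf_row k (v : 'rV[R]_k) (d : 'I_k -> R) j :
  (v *m diagf d) 0 j = v 0 j * d j.
Proof. by rewrite mul_mx_diag !mxE. Qed.

End QuadraticForm.

Section Semidefinite.
Variable R : realFieldType.

Lemma quad_form_diag_gt0 k (d : 'I_k -> R) v : (forall j, 0 < d j) -> v != 0 ->
  0 < quad_form (diagf d) v.
Proof.
move=> d_gt0 /matrix0Pn[i [j vj]]; rewrite (ord1 i) in vj.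
rewrite quad_form_diag (bigD1 j) //= ltr_wpDr //; last first.
  by rewrite mulr_gt0 ?exprn_even_gt0.
by rewrite sumr_ge0 // => l _; exact: mulr_ge0 (ltW (d_gt0 l)) (sqr_ge0 _).
Qed.

Lemma row_dot_self_eq0 k (y : 'rV[R]_k) : (y *m y^T) 0 0 = 0 -> y = 0.
Proof.
have diag1 : diagf (fun=> 1 : R) = 1%:M :> 'M[R]_k.
  by apply/matrixP => i j; rewrite !mxE.
apply: contra_eq => y_neq0; apply: lt0r_neq0.
by have := quad_form_diag_gt0 (fun=> ltr01) y_neq0; rewrite /quad_form diag1 mulmx1.
Qed.

Lemma nonneg_quadratic_lin_coef0 (a b : R) :
  (forall t, 0 <= a * t + b * t ^+ 2) -> a = 0.
Proof.
move=> ge0; set e := `|b| + 1; have e_gt0 : 0 < e := ltr_wpDl (normr_ge0 b) ltr01.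
have : 0 <= a ^+ 2 * (b - e) / e ^+ 2.
  have -> : a ^+ 2 * (b - e) / e ^+ 2 = a * (- a / e) + b * (- a / e) ^+ 2.
    by field; rewrite gt_eqF.
  exact: ge0.
rewrite pmulr_lge0 ?invr_gt0 ?exprn_gt0 // => ge0a.
have b_lt_e : b - e < 0 by rewrite subr_lt0 /e ltr_pwDr ?ler_norm.
apply/eqP; rewrite -sqrf_eq0 eq_le sqr_ge0 andbT; nra.
Qed.

Lemma psd_isotropic_kernel k (B : 'M[R]_k) c : B^T = B ->
  (forall v, 0 <= quad_form B v) -> quad_form B c = 0 -> c *m B = 0.
Proof.
move=> sB psd c0; set y := c *m B; apply: row_dot_self_eq0.
suff : 2 * (y *m y^T) 0 0 = 0 by move/eqP; rewrite mulf_eq0 pnatr_eq0 => /eqP.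
apply: (@nonneg_quadratic_lin_coef0 _ (quad_form B y)) => t.
have := psd (c + t *: y); rewrite quad_formD_sym // quad_formZ c0 add0r.
by rewrite -/y linearZ /= -scalemxAr mxE; lra.
Qed.

End Semidefinite.

Section Rayleigh.
Variable R : realType.

Lemma continuous_quad_form k (B : 'M[R]_k) : continuous (quad_form B).
Proof.
have -> : quad_form B = fun v => \sum_i \sum_j v 0 i * B i j * v 0 j.
  by apply/funext => v; rewrite quad_formE.
move=> v; apply: (cvg_big (F := nbhs v) add_continuous) => i _.
apply: (cvg_big (F := nbhs v) add_continuous) => j _.
apply: cvgM; last exact: coord_continuous.
by apply: cvgM; [exact: coord_continuous | exact: cvg_cst].
Qed.

Lemma compact_diag_ellipsoid k (d : 'I_k -> R) : (forall j, 0 < d j) ->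
  compact [set v | quad_form (diagf d) v = 1].
Proof.
move=> d_gt0; pose b i := 1 + (d i)^-1.
set E := [set v | quad_form (diagf d) v = 1].
have -> : E = [set v : 'rV[R]_k | forall i, `[- b i, b i] (v ord0 i)] `&` E.
  apply/seteqP; split => [v v1|v []//]; split => // i.
  have : d i * v 0 i ^+ 2 <= 1.
    rewrite -v1 quad_form_diag (bigD1 i) //= lerDl.
    by rewrite sumr_ge0 // => l _; exact: mulr_ge0 (ltW (d_gt0 l)) (sqr_ge0 _).
  rewrite -ler_pdivlMl // mulr1 => vi_le.
  have dinv_gt0 : 0 < (d i)^-1 by rewrite invr_gt0.
  by rewrite /= in_itv /= /b; apply/andP; split; nra.
apply: compact_closedI.
  apply: (rV_compact (A := fun i => `[- b i, b i]%classic)) => i.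
  exact: segment_compact.
apply: (@preimage_closed _ _ (quad_form (diagf d)) [set x | x = 1]).
  by move=> v _; exact: continuous_quad_form.
exact: closed_eq.
Qed.

Lemma quad_form_normalize k (B : 'M[R]_k) v : 0 < quad_form B v ->
  quad_form B ((Num.sqrt (quad_form B v))^-1 *: v) = 1.
Proof.
by move=> Bv_gt0; rewrite quad_formZ exprVn sqr_sqrtr ?mulVf ?gt_eqF ?(ltW Bv_gt0).
Qed.

Lemma quad_form_max_on_ellipsoid k (P : 'M[R]_k) (d : 'I_k -> R) :
  (0 < k)%N -> (forall j, 0 < d j) ->
  exists2 c, quad_form (diagf d) c = 1 &
    forall v, quad_form P v <= quad_form P c * quad_form (diagf d) v.
Proof.
move=> k_gt0 d_gt0; set E := [set v | quad_form (diagf d) v = 1].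
have E_normalize v : v != 0 -> E ((Num.sqrt (quad_form (diagf d) v))^-1 *: v).
  by move=> v_neq0; apply: quad_form_normalize; exact: quad_form_diag_gt0.
have E_neq0 : E !=set0.
  exists ((Num.sqrt (quad_form (diagf d) (const_mx 1)))^-1 *: const_mx 1).
  apply: E_normalize; apply/matrix0Pn.
  by exists 0, (Ordinal k_gt0); rewrite mxE oner_neq0.
have [c /set_mem Ec c_max] := EVT_max_rV E_neq0 (compact_diag_ellipsoid d_gt0)
  (continuous_subspaceT (@continuous_quad_form _ P)).
exists c => // v.
have [->|v_neq0] := eqVneq v 0; first by rewrite !quad_form0 mulr0.
have Dv_gt0 := quad_form_diag_gt0 d_gt0 v_neq0.
have := c_max _ (mem_set (E_normalize _ v_neq0)).
by rewrite quad_formZ exprVn sqr_sqrtr ?(ltW Dv_gt0) // -ler_pdivrMr // mulrC.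
Qed.

Lemma sym_pencil_eigen_ge k (P : 'M[R]_k) (d : 'I_k -> R) u theta :
  P^T = P -> (forall j, 0 < d j) -> u != 0 ->
  theta * quad_form (diagf d) u <= quad_form P u ->
  exists2 a, theta <= a &
    exists2 c : 'rV[R]_k, c != 0 & c *m P = a *: (c *m diagf d).
Proof.
move=> sP d_gt0 u_neq0 theta_u.
have k_gt0 : (0 < k)%N.
  by case/matrix0Pn: u_neq0 => _ [j _]; exact: leq_ltn_trans (leq0n j) (ltn_ord j).
have [c Dc1 c_max] := quad_form_max_on_ellipsoid P k_gt0 d_gt0.
exists (quad_form P c).
  rewrite -(ler_pM2r (quad_form_diag_gt0 d_gt0 u_neq0)).
  exact: le_trans theta_u (c_max u).
exists c.
  apply/eqP => c0; move: Dc1; rewrite c0 quad_form0 => /eqP.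
  by rewrite eq_sym oner_eq0.
have : c *m (quad_form P c *: diagf d - P) = 0.
  apply: psd_isotropic_kernel.
  - by rewrite linearB /= linearZ /= tr_diag_mx sP.
  - by move=> v; rewrite quad_formB quad_form_scale subr_ge0.
  - by rewrite quad_formB quad_form_scale Dc1 mulr1 subrr.
by rewrite mulmxBr -scalemxAr => /eqP; rewrite subr_eq0 => /eqP <-.
Qed.

Lemma eigenvalue_mul_diag_mono k (P : 'M[R]_k) (d e : 'I_k -> R) t mu :
  P^T = P -> (forall j, 0 < d j) -> (forall j, 0 < e j) ->
  (forall j, t * d j <= e j) -> 0 <= mu -> eigenvalue (P *m diagf d) mu ->
  exists2 a, t * mu <= a & eigenvalue (P *m diagf e) a.
Proof.
move=> sP d_gt0 e_gt0 tde mu_ge0 /eigenvalueP[v vPd v_neq0].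
have vP j : (v *m P) 0 j = mu * (v 0 j / d j).
  have := congr1 (fun w : 'rV[R]_k => w 0 j) vPd.
  rewrite mulmxA mulmx_diagf_row [(mu *: v) 0 j]mxE => vPj.
  by rewrite mulrA -vPj mulfK ?gt_eqF.
have einv_gt0 j : 0 < (e j)^-1 by rewrite invr_gt0.
have [|a ta [c c_neq0 cP]] :=
  sym_pencil_eigen_ge (theta := t * mu) sP einv_gt0 v_neq0.
  rewrite quad_form_diag /quad_form mxE mulr_sumr; apply: ler_sum => j _.
  rewrite vP [v^T _ _]mxE.
  have te : t / e j <= (d j)^-1 by rewrite ler_pdivrMr // mulrC ler_pdivlMr.
  have -> : t * mu * ((e j)^-1 * v 0 j ^+ 2) = mu * v 0 j ^+ 2 * (t / e j) by ring.
  have -> : mu * (v 0 j / d j) * v 0 j = mu * v 0 j ^+ 2 * (d j)^-1 by ring.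
  by apply: ler_wpM2l te; exact: mulr_ge0 mu_ge0 (sqr_ge0 _).
exists a => //; apply/eigenvalueP; exists c => //.
rewrite mulmxA cP -scalemxAl; congr (_ *: _); apply/rowP => j.
by rewrite !mulmx_diagf_row mulfVK ?gt_eqF.
Qed.

End Rayleigh.

Lemma eigenvalue_le_sum_norm (R : realFieldType) k (B : 'M[R]_k) a :
  eigenvalue B a -> a <= \sum_i \sum_j `|B i j|.
Proof.
case/eigenvalueP => v vB /matrix0Pn[i0 [j0 v_j0]]; rewrite (ord1 i0) in v_j0.
have [i _ v_max] := @arg_maxP _ _ 'I_k j0 xpredT (fun i => `|v 0 i|) isT.
have vi_gt0 : 0 < `|v 0 i| by apply: lt_le_trans (v_max j0 isT); rewrite normr_gt0.
have a_vi : a * v 0 i = \sum_j v 0 j * B j i.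
  by have := congr1 (fun w : 'rV[R]_k => w 0 i) vB; rewrite !mxE => <-.
have col_le : `|a| <= \sum_j `|B j i|.
  rewrite -(ler_pM2r vi_gt0) -normrM a_vi mulr_suml.
  apply: le_trans (ler_norm_sum _ _ _) _; apply: ler_sum => j _.
  by rewrite normrM mulrC; apply: ler_wpM2l => //; exact: v_max.
apply: le_trans (ler_norm a) (le_trans col_le _); apply: ler_sum => l _.
by rewrite (bigD1 i) //= lerDl sumr_ge0.
Qed.

Section SpectralRadius.
Variable R : realType.

Lemma has_ubound_eigenvalue k (B : 'M[R]_k) : has_ubound [set a | eigenvalue B a].
Proof. by exists (\sum_i \sum_j `|B i j|) => a /eigenvalue_le_sum_norm. Qed.

Lemma eigenvalue_le_rho k (B : 'M[R]_k) a : eigenvalue B a -> a <= rho B.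
Proof.
move=> Ba; apply: sup_upper_bound => //; split; first by exists a.
exact: has_ubound_eigenvalue.
Qed.

Lemma rho_gt0_eigenvalue k (B : 'M[R]_k) : 0 < rho B ->
  exists2 a, eigenvalue B a & 0 < a.
Proof.
move=> rho_gt0; have E_neq0 : [set a | eigenvalue B a] !=set0.
  by apply/set0P/eqP => E0; move: rho_gt0; rewrite /rho E0 sup0 ltxx.
have [a Ba] := sup_adherent rho_gt0 (conj E_neq0 (has_ubound_eigenvalue B)).
by rewrite subrr; exists a.
Qed.

Lemma GW_meanE k (m : 'I_k -> R) (P : 'M[R]_k) : GW_mean m P = P *m diagf m.
Proof. by apply/matrixP => i j; rewrite mul_mx_diag !mxE mulrC. Qed.

Lemma rho_GW_mean_mono k (P : 'M[R]_k) (d e : 'I_k -> R) t :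
  P^T = P -> (forall j, 0 < d j) -> (forall j, 0 < e j) -> 0 < t ->
  (forall j, t * d j <= e j) -> 0 < rho (GW_mean d P) ->
  t * rho (GW_mean d P) <= rho (GW_mean e P).
Proof.
rewrite !GW_meanE => sP d_gt0 e_gt0 t_gt0 tde rho_gt0.
have mono mu :
    0 <= mu -> eigenvalue (P *m diagf d) mu -> t * mu <= rho (P *m diagf e).
  move=> mu_ge0 /(eigenvalue_mul_diag_mono sP d_gt0 e_gt0 tde mu_ge0)[a ta ea].
  exact: le_trans ta (eigenvalue_le_rho ea).
have [mu0 Bmu0 mu0_gt0] := rho_gt0_eigenvalue rho_gt0.
have rho_e_ge0 : 0 <= rho (P *m diagf e).
  exact: le_trans (mulr_ge0 (ltW t_gt0) (ltW mu0_gt0)) (mono _ (ltW mu0_gt0) Bmu0).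
rewrite mulrC -ler_pdivlMr //; apply: ge_sup; first by exists mu0.
move=> mu Bmu; have [mu_ge0|mu_lt0] := leP 0 mu.
  by rewrite (ler_pdivlMr _ _ t_gt0) mulrC; exact: mono.
by apply: le_trans (ltW mu_lt0) _; exact: divr_ge0 rho_e_ge0 (ltW t_gt0).
Qed.

End SpectralRadius.

Lemma powR_sublinear (R : realType) (a K : R) : a < 1 ->
  exists N : nat, forall n : nat, (N <= n)%N -> K * n%:R `^ a <= n%:R.
Proof.
move=> a_lt1; exists (Num.bound (`|K| `^ (1 - a)^-1)) => n N_le_n.
have n_gt : `|K| `^ (1 - a)^-1 < n%:R.
  by apply: lt_le_trans (archi_boundP (powR_ge0 _ _)) _; rewrite ler_nat.
have n_gt0 : 0 < n%:R :> R := le_lt_trans (powR_ge0 _ _) n_gt.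
have K_le : `|K| <= n%:R `^ (1 - a).
  have -> : `|K| = (`|K| `^ (1 - a)^-1) `^ (1 - a).
    by rewrite -powRrM mulVf ?powRr1 // subr_eq0 gt_eqF.
  apply: ge0_ler_powR; rewrite ?nnegrE ?subr_ge0 ?powR_ge0 ?ler0n //; exact: ltW.
have n_split : n%:R = n%:R `^ a * n%:R `^ (1 - a) :> R.
  by rewrite -powRD ?(gt_eqF n_gt0) ?implybT // addrC subrK powRr1 //; exact: ltW.
rewrite [leRHS]n_split mulrC ler_wpM2l ?powR_ge0 //.
exact: le_trans (ler_norm K) K_le.
Qed.

Lemma balanced_powR_le (R : realType) (A r : nat) (a delta : R) :
  a < 1 -> 0 < delta ->
  exists N : nat, forall nn : 'I_r -> nat,
    (forall i, (0 < nn i)%N) -> (forall i j, (nn i <= A * nn j)%N) ->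
    (N <= \sum_i nn i)%N -> forall j, (\sum_i nn i)%:R `^ a <= delta * (nn j)%:R.
Proof.
move=> a_lt1 delta_gt0.
have [N N_large] := powR_sublinear ((r * A)%:R / delta) a_lt1.
exists N => nn nn_gt0 nn_bal N_le j; set n := (\sum_i nn i)%N.
have nj_le : (nn j <= n)%N by rewrite /n (bigD1 j) //= leq_addr.
have n_le : (n <= r * A * nn j)%N.
  apply: (@leq_trans (\sum_(i < r) A * nn j)); first by apply: leq_sum => i _.
  by rewrite sum_nat_const card_ord mulnA.
have rA_gt0 : 0 < (r * A)%:R :> R.
  have := leq_trans (leq_trans (nn_gt0 j) nj_le) n_le.
  by rewrite ltr0n muln_gt0 => /andP[].
have := N_large n N_le; rewrite mulrAC ler_pdivrMr // => c_le.
rewrite -(ler_nat R) natrM in n_le.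
rewrite -(ler_pM2l rA_gt0); nra.
Qed.

Lemma pmat_sym (R : realType) k (nn : 'I_k -> nat) (L : 'M[R]_k) :
  L^T = L -> (pmat nn L)^T = pmat nn L.
Proof.
move=> sL; apply/matrixP => i j; rewrite !mxE [(nn j)%:R * _]mulrC.
by have := congr1 (fun M : 'M[R]_k => M j i) sL; rewrite mxE => ->.
Qed.

Theorem claim3p2 (R : realType) (A r : nat) (eps : R) :
  0 < eps ->
  exists N : nat,
    forall (nn : 'I_r -> nat) (L : 'M[R]_r),
      (forall i, (0 < nn i)%N) ->
      (forall i j, (nn i <= A * nn j)%N) ->
      (N <= \sum_(i < r) nn i)%N ->
      L^T = L ->
      (forall i j, 0 <= L i j) ->
      eps_separated eps L ->
      1 + eps <= rho (GW_mean (fun j => (nn j)%:R) (pmat nn L)) ->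
      let n := (\sum_(i < r) nn i)%N in
      let m := fun j => (nn j)%:R - powR (n%:R) (999%:R / 1000%:R) in
      1 + eps / 2 <= rho (GW_mean m (pmat nn L))
      /\ GW_supercritical m (pmat nn L).
Proof.
move=> eps_gt0; pose delta := eps / (2 * (1 + eps)).
have delta_gt0 : 0 < delta by rewrite divr_gt0 // mulr_gt0 //; lra.
have delta_lt1 : delta < 1 by rewrite ltr_pdivrMr ?mul1r ?mulr_gt0 //; lra.
have delta_eps : (1 - delta) * (1 + eps) = 1 + eps / 2.
  by rewrite /delta; field; rewrite gt_eqF //; lra.
have exponent_lt1 : 999%:R / 1000%:R < 1 :> R.
  by rewrite ltr_pdivrMr ?ltr0n // mul1r ltr_nat.
have [N c_small] := balanced_powR_le A r exponent_lt1 delta_gt0.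
exists N => nn L nn_gt0 nn_bal N_le sL _ _ rho_M n m.
have m_ge j : (1 - delta) * (nn j)%:R <= m j.
  by rewrite /m mulrBl mul1r lerD2l lerN2 (c_small nn nn_gt0 nn_bal N_le).
have nn_gt0R j : 0 < (nn j)%:R :> R by rewrite ltr0n.
have t_gt0 : 0 < 1 - delta by rewrite subr_gt0.
have m_gt0 j : 0 < m j by apply: lt_le_trans (m_ge j); rewrite mulr_gt0.
have rho_gt0 := lt_le_trans (addr_gt0 ltr01 eps_gt0) rho_M.
have rho_Q := rho_GW_mean_mono (pmat_sym nn sL) nn_gt0R m_gt0 t_gt0 m_ge rho_gt0.
have rho_Q_ge : 1 + eps / 2 <= rho (GW_mean m (pmat nn L)).
  by rewrite -delta_eps; apply: le_trans _ rho_Q; rewrite ler_pM2l.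
split; first exact: rho_Q_ge.
by apply: lt_le_trans rho_Q_ge; rewrite ltrDl divr_gt0.
Qed.
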